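(* Let $X_1$ be a positive random variable distributed as $X$, where $\mathbb{E}X=1$, and let $p\ge2$ be an integer. If $\mathbb{P}\{X\ge x\}=o(x^{-p-1})$ as $x\to\infty$, then $$\mathbb{E}\frac{X_1^{2p}}{\left(\frac1nX_1+1\right)^p}=o(n^{p-1})\quad(n\to\infty).$$ In addition, if $\mathbb{P}\{X\ge x\}=O(x^{-q})$ as $x\to\infty$ for some real $q$ with $p<q<2p$, then $$\mathbb{E}\frac{X_1^{2p}}{\left(\frac1nX_1+1\right)^p}=O(n^{2p-q}).$$ *)

From HB Require Import structures.
From mathcomp Require Import all_boot all_order all_algebra.
From mathcomp Require Import all_classical all_reals all_analysis.
Set Implicit Arguments. Unset Strict Implicit. Unset Printing Implicit Defensive.
Import Order.TTheory GRing.Theory Num.Theory.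
Local Open Scope classical_set_scope.
Local Open Scope ring_scope.

Definition tail_prob d (T : measurableType d) (R : realType)
  (P : probability T R) (X : {RV P >-> R}) (x : R) : R :=
  fine (P [set t | x <= X t]).

Definition lem5_integrand d (T : measurableType d) (R : realType)
  (P : probability T R) (X : {RV P >-> R}) (p n : nat) (t : T) : R :=
  X t ^+ (2 * p) / (X t / n%:R + 1) ^+ p.

Definition lem5_expect d (T : measurableType d) (R : realType)
  (P : probability T R) (X : {RV P >-> R}) (p n : nat) : \bar R :=
  (\int[P]_t (lem5_integrand X p n t)%:E)%E.

(* the filter x --> +oo on R, packaged as a filter_on for Landau notation *)
Definition pinfty_filter (R : realType) : filter_on R :=
  FilterType (pinfty_nbhs R) (@proper_pinfty_nbhs R : Filter (pinfty_nbhs R)).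

(* With h_n(y) = y^(2p) / (y/n + 1)^p, which is nondecreasing on [0, +oo) and
   bounded by both y^(2p) and n^p y^p, cutting at the dyadic points 2^k gives
   h_n(X) <= 1 + sum_k h_n(2^(k+1)) 1{X >= 2^k}, hence
   E h_n(X) <= 1 + sum_k h_n(2^(k+1)) P{X >= 2^k}.
   If P{X >= x} <= C x^(-a) for large x, with p < a < 2p, the k-th term is at
   most C min(2^(2p) 2^((2p-a)k), n^p 2^p 2^((p-a)k)): a geometric series that
   increases up to k ~ log2 n and decreases afterwards, so the sum is
   O(C n^(2p-a)). Taking a = q gives the O-bound; taking a = p + 1 with C
   arbitrarily small (the little-o tail) gives o(n^(p-1)). *)

From HB Require Import structures.
From mathcomp Require Import all_boot all_order all_algebra.
From mathcomp Require Import all_classical all_reals all_analysis.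
From mathcomp Require Import ring lra zify measurable_realfun.
Import Order.TTheory GRing.Theory Num.Theory.
Local Open Scope classical_set_scope.
Local Open Scope ring_scope.

Section damped_power.
Context {R : realType} (p n : nat).

Definition damped_pow (y : R) : R := y ^+ (2 * p) / (y / n%:R + 1) ^+ p.

Lemma damped_powE (y : R) : damped_pow y = (y ^+ 2 / (y / n%:R + 1)) ^+ p.
Proof. by rewrite /damped_pow exprM expr_div_n. Qed.

Lemma damped_den_gt0 (y : R) : 0 <= y -> 0 < y / n%:R + 1.
Proof. by move=> y0; rewrite ltr_wpDl ?divr_ge0. Qed.

Lemma damped_base_ge0 (y : R) : 0 <= y -> 0 <= y ^+ 2 / (y / n%:R + 1).
Proof. by move=> y0; rewrite divr_ge0 ?sqr_ge0 ?ltW ?damped_den_gt0. Qed.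

Lemma damped_pow_ge0 (y : R) : 0 <= y -> 0 <= damped_pow y.
Proof. by move=> y0; rewrite damped_powE exprn_ge0 ?damped_base_ge0. Qed.

Lemma le_damped_pow (y z : R) : 0 <= y -> y <= z -> damped_pow y <= damped_pow z.
Proof.
move=> y0 yz; have z0 := le_trans y0 yz.
rewrite !damped_powE lerXn2r ?nnegrE ?damped_base_ge0 //.
rewrite ler_pdivrMr ?damped_den_gt0 // mulrAC ler_pdivlMr ?damped_den_gt0 //.
have yz2 : y ^+ 2 <= z ^+ 2 by rewrite lerXn2r ?nnegrE.
have yzn : y * (y * z / n%:R) <= z * (y * z / n%:R).
  by rewrite ler_wpM2r ?divr_ge0 ?mulr_ge0.
have -> : y ^+ 2 * (z / n%:R + 1) = y * (y * z / n%:R) + y ^+ 2 by ring.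
have -> : z ^+ 2 * (y / n%:R + 1) = z * (y * z / n%:R) + z ^+ 2 by ring.
exact: lerD.
Qed.

Lemma damped_pow_le_expr (y : R) : 0 <= y -> damped_pow y <= y ^+ (2 * p).
Proof.
move=> y0; rewrite damped_powE exprM lerXn2r ?nnegrE ?damped_base_ge0 ?sqr_ge0 //.
by rewrite ler_pdivrMr ?damped_den_gt0 // ler_peMr ?sqr_ge0 // lerDr divr_ge0.
Qed.

Lemma damped_pow_le_scaled (y : R) : (0 < n)%N -> 0 <= y ->
  damped_pow y <= n%:R ^+ p * y ^+ p.
Proof.
move=> n0 y0; rewrite damped_powE -exprMn lerXn2r ?nnegrE ?damped_base_ge0 ?mulr_ge0 //.
rewrite ler_pdivrMr ?damped_den_gt0 // mulrDr mulr1.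
have -> : n%:R * y * (y / n%:R) = y ^+ 2 by field; rewrite pnatr_eq0 -lt0n.
by rewrite lerDl mulr_ge0.
Qed.

Lemma damped_pow_le_dyadic_sum N (y : R) : 0 <= y -> y < 2 ^+ N ->
  damped_pow y <= 1 + \sum_(k < N) damped_pow (2 ^+ k.+1) * (2 ^+ k <= y)%R%:R.
Proof.
move=> y0; elim: N => [|N IH] yN.
  rewrite big_ord0 addr0 (le_trans (damped_pow_le_expr _ y0)) //.
  by rewrite exprn_ile1 // ltW.
rewrite big_ord_recr /= addrA.
have [yN'|Ny] := ltP y (2 ^+ N).
  by rewrite (le_trans (IH yN')) // lerDl mulr_ge0 ?damped_pow_ge0 ?exprn_ge0.
rewrite mulr1 (le_trans (le_damped_pow _ _ y0 (ltW yN))) // lerDr.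
by rewrite addr_ge0 // sumr_ge0 // => k _; rewrite mulr_ge0 ?damped_pow_ge0 ?exprn_ge0.
Qed.

End damped_power.

Section geometric_sums.
Context {R : realType}.

Lemma sum_expr_le (r : R) N : 1 < r -> \sum_(k < N) r ^+ k <= r ^+ N / (r - 1).
Proof.
move=> r1; have r10 : 0 < r - 1 by rewrite subr_gt0.
have r_neq1 : r != 1 by rewrite gt_eqF.
have := congr1 (fun u => u N) (geometric_seriesE 1 r_neq1).
rewrite /series /= => sumE.
under eq_bigr do rewrite -[r ^+ _]mul1r.
rewrite -(big_mkord xpredT (fun k => 1 * r ^+ k)) sumE mul1r.
rewrite -opprB -[1 - r]opprB invrN mulrNN ler_pM2r ?invr_gt0 //.
by rewrite lerBlDr lerDl.
Qed.

Lemma sum_expr_tail_le (s : R) M N : 0 < s < 1 ->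
  \sum_(M <= k < N) s ^+ k <= s ^+ M / (1 - s).
Proof.
move=> /andP[s0 s1].
have [NM|MN] := leqP N M; first by rewrite big_geq // divr_ge0 ?exprn_ge0 ?ltW ?subr_gt0.
rewrite -(subnKC (ltnW MN)) geometric_partial_tail.
by rewrite geometric_le_lim ?exprn_ge0 ?ltW // ger0_norm ?ltW.
Qed.

Lemma sum_le_geometric_split {t : nat -> R} {A B r s : R} m N :
  1 < r -> 0 < s < 1 -> (forall k, 0 <= t k) ->
  (forall k, t k <= A * r ^+ k) -> (forall k, t k <= B * s ^+ k) ->
  \sum_(k < N) t k <= A * (r ^+ m / (r - 1)) + B * (s ^+ m / (1 - s)).
Proof.
move=> r1 s01 t0 tA tB.
have A0 : 0 <= A by rewrite -[A]mulr1 -(expr0 r) (le_trans (t0 0)).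
have B0 : 0 <= B by rewrite -[B]mulr1 -(expr0 s) (le_trans (t0 0)).
have head_le M : (M <= m)%N -> \sum_(k < M) t k <= A * (r ^+ m / (r - 1)).
  move=> Mm; apply: (@le_trans _ _ (\sum_(k < M) A * r ^+ k)).
    by apply: ler_sum => k _; exact: tA.
  rewrite -mulr_sumr ler_wpM2l // (le_trans (sum_expr_le r M r1)) //.
  apply: ler_wpM2r; first by rewrite invr_ge0 subr_ge0 ltW.
  by rewrite ler_eXn2l.
have tail_ge0 : 0 <= B * (s ^+ m / (1 - s)).
  case/andP: s01 => s0 s1.
  by rewrite mulr_ge0 // divr_ge0 ?exprn_ge0 ?ltW ?subr_gt0.
have [Nm|mN] := leqP N m; first by rewrite ler_wpDr // head_le.
rewrite -(big_mkord xpredT) (@big_cat_nat _ _ _ m) //=; last exact: ltnW.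
rewrite lerD // ?big_mkord ?head_le //.
apply: (@le_trans _ _ (\sum_(m <= k < N) B * s ^+ k)).
  by apply: ler_sum => k _; exact: tB.
by rewrite -mulr_sumr ler_wpM2l // sum_expr_tail_le.
Qed.

End geometric_sums.

Section dyadic_sum.
Context {R : realType}.

Lemma powR_exprn (x e : R) k : 0 <= x -> (x ^+ k) `^ e = (x `^ e) ^+ k.
Proof.
by move=> x0; rewrite -powR_mulrn // -powRrM mulrC powRrM powR_mulrn ?powR_ge0.
Qed.

Lemma powR_natD (x e : R) j : 0 < x -> x `^ (j%:R + e) = x ^+ j * x `^ e.
Proof.
move=> x0; rewrite powRD ?powR_mulrn ?ltW //.
by apply/implyP => _; rewrite gt_eqF.
Qed.

Lemma powR_gt1 (x e : R) : 1 < x -> 0 < e -> 1 < x `^ e.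
Proof.
move=> x1 e0; have x0 : x != 0 by rewrite gt_eqF // (lt_trans ltr01 x1).
by rewrite /powR (negbTE x0) /= expR_gt1 mulr_gt0 // ln_gt0.
Qed.

Lemma powR_lt1 (x e : R) : 1 < x -> e < 0 -> x `^ e < 1.
Proof.
move=> x1 e0; have x0 : x != 0 by rewrite gt_eqF // (lt_trans ltr01 x1).
by rewrite /powR (negbTE x0) /= expR_lt1 nmulr_rlt0 // ln_gt0.
Qed.

(* The sums of the increasing (ratio 2^(2p-a)) and decreasing (ratio 2^(p-a))
   geometric series that dominate the dyadic sum, in units of n^(2p-a). *)
Definition dyadic_const (p : nat) (a : R) : R :=
  2 ^+ (2 * p) * 2 `^ ((2 * p)%:R - a) / (2 `^ ((2 * p)%:R - a) - 1)
  + 2 ^+ p / (1 - 2 `^ (p%:R - a)).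

Variables (p n : nat) (a : R).
Hypotheses (pa : p%:R < a) (a2p : a < (2 * p)%:R).

Let r := 2 `^ ((2 * p)%:R - a).
Let s := 2 `^ (p%:R - a).

Let r_gt1 : 1 < r. Proof. by rewrite powR_gt1 ?subr_gt0 // ltr1n. Qed.
Let s_gt0 : 0 < s. Proof. exact: powR_gt0. Qed.
Let s_lt1 : s < 1. Proof. by rewrite powR_lt1 ?subr_lt0 // ltr1n. Qed.

Lemma dyadic_const_gt0 : 0 < dyadic_const p a.
Proof.
have r0 : 0 < r by apply: lt_trans r_gt1.
rewrite /dyadic_const -/r -/s.
rewrite ltr_pwDl ?divr_gt0 ?divr_ge0 ?mulr_gt0 ?exprn_gt0 ?exprn_ge0 //.
  by rewrite subr_gt0.
by rewrite subr_ge0 ltW.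
Qed.

Let term k := damped_pow p n (2 ^+ k.+1) * (2 ^+ k) `^ (- a).

Let term_ge0 k : 0 <= term k.
Proof. by rewrite mulr_ge0 ?powR_ge0 ?damped_pow_ge0 ?exprn_ge0. Qed.

Let term_le_low k : term k <= 2 ^+ (2 * p) * r ^+ k.
Proof.
have y0 : 0 <= 2 ^+ k.+1 :> R by rewrite exprn_ge0.
rewrite /term.
apply: le_trans (ler_wpM2r (powR_ge0 _ _) (damped_pow_le_expr p n _ y0)) _.
by rewrite exprS exprMn -mulrA -powR_natD ?exprn_gt0 // powR_exprn.
Qed.

Let term_le_high k : (0 < n)%N -> term k <= n%:R ^+ p * 2 ^+ p * s ^+ k.
Proof.
move=> n0; have y0 : 0 <= 2 ^+ k.+1 :> R by rewrite exprn_ge0.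
rewrite /term.
apply: le_trans (ler_wpM2r (powR_ge0 _ _) (damped_pow_le_scaled p n _ n0 y0)) _.
by rewrite exprS exprMn -!mulrA -powR_natD ?exprn_gt0 // powR_exprn.
Qed.

Lemma sum_dyadic_damped_pow_le N : (0 < n)%N ->
  \sum_(k < N) damped_pow p n (2 ^+ k.+1) * (2 ^+ k) `^ (- a)
    <= dyadic_const p a * n%:R `^ ((2 * p)%:R - a).
Proof.
move=> n0; set m := (trunc_log 2 n).+1; set x := n%:R `^ _.
have n_gt0 : 0 < n%:R :> R by rewrite ltr0n.
have r0 : 0 < r by apply: lt_trans r_gt1.
have low_le : r ^+ m <= r * x.
  rewrite exprS ler_pM2l // /r -powR_exprn //.
  apply: ge0_ler_powR; rewrite ?nnegrE ?exprn_ge0 ?ler0n ?subr_ge0 ?(ltW a2p) //.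
  by rewrite -natrX ler_nat trunc_logP.
have high_le : n%:R ^+ p * s ^+ m <= x.
  rewrite /s -powR_exprn // /x (_ : (2 * p)%:R - a = p%:R + (p%:R - a)).
    rewrite (powR_natD _ _ _ n_gt0) ler_pM2l ?exprn_gt0 // -(opprB a) !powRN.
    rewrite lef_pV2 ?posrE ?powR_gt0 ?exprn_gt0 //.
    apply: ge0_ler_powR; rewrite ?nnegrE ?exprn_ge0 ?ler0n ?subr_ge0 ?(ltW pa) //.
    by rewrite -natrX ler_nat ltnW // trunc_log_ltn.
  by rewrite natrM; lra.
have s01 : 0 < s < 1 by rewrite s_gt0 s_lt1.
apply: le_trans (sum_le_geometric_split m N r_gt1 s01 term_ge0 term_le_low
  (fun k => term_le_high k n0)) _.
rewrite /dyadic_const -/r -/s mulrDl; apply: lerD.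
  have -> : 2 ^+ (2 * p) * r / (r - 1) * x = 2 ^+ (2 * p) * (r * x / (r - 1)) by ring.
  by rewrite ler_pM2l ?exprn_gt0 // ler_pM2r ?invr_gt0 ?subr_gt0.
have -> : n%:R ^+ p * 2 ^+ p * (s ^+ m / (1 - s))
    = 2 ^+ p / (1 - s) * (n%:R ^+ p * s ^+ m) by ring.
by rewrite ler_pM2l // divr_gt0 ?exprn_gt0 ?subr_gt0.
Qed.

End dyadic_sum.

Lemma exists_expr2_gt {R : archiFieldType} (x : R) :
  exists N, forall k, (N <= k)%N -> x < 2 ^+ k.
Proof.
exists (Num.Def.archi_bound `|x|) => k Nk.
rewrite (le_lt_trans (ler_norm x)) // (lt_le_trans (archi_boundP (normr_ge0 x))) //.
by rewrite -natrX ler_nat (leq_trans Nk) // ltnW // ltn_expl.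
Qed.

(* Unlike [ge0_le_integral], no measurability is needed: the integral of a
   nonnegative function is a supremum over the simple functions below it. *)
Lemma ge0_le_integralT {d} {T : measurableType d} {R : realType}
    {mu : {measure set T -> \bar R}} (f g : T -> \bar R) :
  (forall x, 0 <= f x)%E -> (forall x, f x <= g x)%E ->
  (\int[mu]_x f x <= \int[mu]_x g x)%E.
Proof.
move=> f0 fg; have g0 x : (0 <= g x)%E by exact: le_trans (fg x).
rewrite !ge0_integralTE //; apply: le_ereal_sup => _ [h /= hf <-].
by exists h => //= x; exact: le_trans (fg x).
Qed.

Section damped_moment.
Context {d} {T : measurableType d} {R : realType} {P : probability T R}.
Context {X : {RV P >-> R}}.
Hypothesis X_ge0 : forall t, 0 <= X t.

Lemma measurable_superlevel (x : R) : measurable [set t | x <= X t].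
Proof.
have -> : [set t | x <= X t] = X @^-1` `[x, +oo[.
  by apply/seteqP; split => t; rewrite /= in_itv /= andbT.
exact: measurable_funPTI.
Qed.

Lemma tail_probE (x : R) : P [set t | x <= X t] = (tail_prob X x)%:E.
Proof.
by rewrite /tail_prob fineK // fin_num_measure //; exact: measurable_superlevel.
Qed.

Lemma tail_prob_ge0 (x : R) : 0 <= tail_prob X x.
Proof. by rewrite -lee_fin -tail_probE. Qed.

Lemma tail_prob_le1 (x : R) : tail_prob X x <= 1.
Proof.
by rewrite -lee_fin -tail_probE; apply: probability_le1; exact: measurable_superlevel.
Qed.

Lemma lem5_expect_le_dyadic p n : (lem5_expect X p n <=
  1 + \sum_(k <oo) (damped_pow p n (2 ^+ k.+1))%:E * P [set t | (2 ^+ k <= X t)%R])%E.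
Proof.
pose A k := [set t | (2 : R) ^+ k <= X t].
pose u k t : \bar R := (damped_pow p n (2 ^+ k.+1 : R) * \1_(A k) t)%:E.
have u_ge0 k t : (0 <= u k t)%E by rewrite lee_fin mulr_ge0 ?damped_pow_ge0 ?exprn_ge0.
have measurable_u k : measurable_fun setT (u k).
  apply/measurable_EFinP; apply: measurable_funM => //.
  exact/measurable_indic/measurable_superlevel.
have int_u k : (\int[P]_t u k t = (damped_pow p n (2 ^+ k.+1))%:E * P (A k))%E.
  rewrite /u; under eq_integral do rewrite EFinM.
  rewrite ge0_integralZl_EFin ?integral_indic ?setIT ?damped_pow_ge0 ?exprn_ge0 //.
  - exact: measurable_superlevel.
  - exact/measurable_EFinP/measurable_indic/measurable_superlevel.
have pointwise t : ((lem5_integrand X p n t)%:E <= 1 + \sum_(k <oo) u k t)%E.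
  have [N XN] := exists_expr2_gt (X t).
  apply: (@le_trans _ _ (1 + \sum_(0 <= k < N) u k t)%E).
    rewrite /u sumEFin -EFinD lee_fin.
    rewrite (le_trans (damped_pow_le_dyadic_sum p n _ _ (X_ge0 t) (XN N (leqnn N)))) //.
    by rewrite lerD2l big_mkord; apply: ler_sum => k _; rewrite indicE mem_setE.
  by rewrite leeD2l // nneseries_lim_ge.
have integrand_ge0 t : (0 <= (lem5_integrand X p n t)%:E)%E.
  by rewrite lee_fin damped_pow_ge0.
apply: le_trans (ge0_le_integralT _ _ integrand_ge0 pointwise) _.
rewrite ge0_integralD //;
  [|by move=> t _; apply: nneseries_ge0 => k _ _; exact: u_ge0
   |exact: ge0_emeasurable_sum].
apply: leeD; first by rewrite integral_cst //= mul1e probability_le1.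
rewrite integral_nneseries //; apply: lee_nneseries => [k _ _|k _].
  by apply: integral_ge0 => t _; exact: u_ge0.
by rewrite int_u.
Qed.

Lemma lem5_expect_le_tail p n (a C : R) k0 :
  (0 < n)%N -> p%:R < a -> a < (2 * p)%:R -> 0 <= C ->
  (forall k, (k0 <= k)%N -> tail_prob X (2 ^+ k) <= C * (2 ^+ k) `^ (- a)) ->
  (lem5_expect X p n <= (1 + \sum_(0 <= k < k0) (2 ^+ k.+1) ^+ (2 * p)
     + C * dyadic_const p a * n%:R `^ ((2 * p)%:R - a))%:E)%E.
Proof.
move=> n0 pa a2p C0 tail_le.
pose term k := damped_pow p n (2 ^+ k.+1 : R) * tail_prob X (2 ^+ k).
have term_ge0 k : 0 <= term k.
  by rewrite mulr_ge0 ?damped_pow_ge0 ?exprn_ge0 ?tail_prob_ge0.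
have head_le k : term k <= (2 ^+ k.+1) ^+ (2 * p).
  rewrite (le_trans (ler_wpM2l _ (tail_prob_le1 _))) ?damped_pow_ge0 ?exprn_ge0 //.
  by rewrite mulr1 damped_pow_le_expr // exprn_ge0.
have tail_sum_le N : (k0 <= N)%N -> \sum_(k0 <= k < N) term k
    <= C * (dyadic_const p a * n%:R `^ ((2 * p)%:R - a)).
  move=> k0N.
  apply: (@le_trans _ _
    (C * \sum_(k0 <= k < N) damped_pow p n (2 ^+ k.+1) * (2 ^+ k) `^ (- a))).
    rewrite mulr_sumr; apply: ler_sum_nat => k /andP[k0k _].
    by rewrite /term mulrCA ler_wpM2l ?damped_pow_ge0 ?exprn_ge0 ?tail_le.
  apply: ler_wpM2l => //; apply: le_trans (sum_dyadic_damped_pow_le _ _ _ pa a2p N n0).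
  rewrite -(big_mkord xpredT (fun k => damped_pow p n (2 ^+ k.+1) * (2 ^+ k) `^ (- a))).
  rewrite [X in _ <= X](@big_cat_nat _ _ _ k0) //= lerDr.
  by apply: sumr_ge0 => k _; rewrite mulr_ge0 ?powR_ge0 ?damped_pow_ge0 ?exprn_ge0.
apply: le_trans (lem5_expect_le_dyadic p n) _.
rewrite -addrA EFinD leeD2l //.
apply: lime_le.
  by apply: is_cvg_nneseries => k _ _; rewrite tail_probE -EFinM lee_fin term_ge0.
exists k0 => // N /= k0N.
under eq_bigr do rewrite tail_probE -EFinM.
rewrite sumEFin lee_fin (@big_cat_nat _ _ _ k0) //= -mulrA lerD ?tail_sum_le //.
by apply: ler_sum_nat => k _; exact: head_le.
Qed.

Lemma lem5_expect_bound p (a C : R) : p%:R < a -> a < (2 * p)%:R -> 0 <= C ->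
  (\forall x \near +oo, tail_prob X x <= C * x `^ (- a)) ->
  exists K, forall n, (0 < n)%N ->
    (lem5_expect X p n <= (K + C * dyadic_const p a * n%:R `^ ((2 * p)%:R - a))%:E)%E.
Proof.
move=> pa a2p C0 [M [_ tail_le]]; have [k0 k0M] := exists_expr2_gt M.
exists (1 + \sum_(0 <= k < k0) (2 ^+ k.+1) ^+ (2 * p)) => n n0.
by apply: lem5_expect_le_tail => // k /k0M /tail_le.
Qed.

Lemma lem5_expect_ge0 p n : (0 <= lem5_expect X p n)%E.
Proof. by apply: integral_ge0 => t _; rewrite lee_fin damped_pow_ge0. Qed.

Lemma lem5_expect_fin_le {p n} {B : R} : (lem5_expect X p n <= B%:E)%E ->
  (lem5_expect X p n < +oo)%E /\ `|fine (lem5_expect X p n)| <= B.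
Proof.
move=> EB; have E0 := lem5_expect_ge0 p n.
have Efin : lem5_expect X p n \is a fin_num.
  by rewrite ge0_fin_numE // (le_lt_trans EB) ?ltry.
split; first exact: le_lt_trans EB (ltry B).
by rewrite ger0_norm ?fine_ge0 // -lee_fin fineK.
Qed.

Lemma lem5_expect_le_littleo_tail p : (2 <= p)%N ->
  (fun x => tail_prob X x) =o_ (pinfty_filter R) (fun x => x ^- p.+1) ->
  forall eps, 0 < eps -> exists K, forall n, (0 < n)%N ->
    (lem5_expect X p n <= (K + eps * n%:R ^+ p.-1)%:E)%E.
Proof.
move=> p2 /eqoP tail_o eps eps0.
have pa : p%:R < p.+1%:R :> R by rewrite ltr_nat.
have a2p : p.+1%:R < (2 * p)%:R :> R by rewrite ltr_nat; lia.
have D0 := dyadic_const_gt0 _ _ pa a2p.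
set C := eps / dyadic_const p p.+1%:R.
have C0 : 0 < C by rewrite divr_gt0.
have tail_le : \forall x \near +oo, tail_prob X x <= C * x `^ (- p.+1%:R).
  near=> x; have x0 : 0 < x by near: x; apply: nbhs_pinfty_gt; exact: real0.
  rewrite powR_invn ?(ltW x0) // -[x ^- _]ger0_norm ?invr_ge0 ?exprn_ge0 ?(ltW x0) //.
  apply: le_trans (ler_norm _) _.
  by near: x; exact: tail_o.
have [K HK] := lem5_expect_bound p p.+1%:R C pa a2p (ltW C0) tail_le.
have CD : C * dyadic_const p p.+1%:R = eps by rewrite divfK ?gt_eqF.
exists K => n n0; rewrite -CD -powR_mulrn // (_ : p.-1%:R = (2 * p)%:R - p.+1%:R).
  exact: HK.
by rewrite -natrB; [congr _%:R; lia | lia].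
Unshelve. all: by end_near.
Qed.

Lemma lem5_expect_littleo p : (2 <= p)%N ->
  (fun x => tail_prob X x) =o_ (pinfty_filter R) (fun x => x ^- p.+1) ->
  (forall n, (0 < n)%N -> (lem5_expect X p n < +oo)%E) /\
  (fun n => fine (lem5_expect X p n)) =o_\oo (fun n => n%:R ^+ p.-1 : R).
Proof.
move=> p2 tail_o; have bound := lem5_expect_le_littleo_tail p p2 tail_o.
split.
  by move=> n n0; have [K /(_ n n0)/lem5_expect_fin_le[]] := bound 1 ltr01.
apply/eqoP => eps eps0.
have eps20 : 0 < eps / 2 by rewrite divr_gt0.
have [K HK] := bound _ eps20.
near=> n.
have n0 : (0 < n)%N by near: n; exact: nbhs_infty_gt.
have nK : 2 * `|K| / eps <= n%:R :> R by near: n; exact: nbhs_infty_ger.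
have [_ /le_trans ->] := lem5_expect_fin_le (HK n n0) => //.
rewrite ger0_norm ?exprn_ge0 //.
have n_le : eps / 2 * n%:R <= eps / 2 * n%:R ^+ p.-1.
  apply: ler_wpM2l; first exact: ltW.
  by apply: ler_eXnr; [lia | rewrite ler1n].
have K_le : K <= eps / 2 * n%:R.
  rewrite (le_trans (ler_norm K)) //.
  have -> : `|K| = eps / 2 * (2 * `|K| / eps) by field; rewrite gt_eqF.
  by apply: ler_wpM2l => //; exact: ltW.
lra.
Unshelve. all: by end_near.
Qed.

Lemma lem5_expect_bigO p (q : R) : p%:R < q -> q < (2 * p)%:R ->
  (fun x => tail_prob X x) =O_ (pinfty_filter R) (fun x => x `^ (- q)) ->
  (forall n, (0 < n)%N -> (lem5_expect X p n < +oo)%E) /\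
  (fun n => fine (lem5_expect X p n)) =O_\oo (fun n => n%:R `^ (2 * p%:R - q)).
Proof.
move=> pq q2p /eqO_exP[C C0 tail_O].
have tail_le : \forall x \near +oo, tail_prob X x <= C * x `^ (- q).
  by apply: filterS tail_O => x; rewrite !ger0_norm ?tail_prob_ge0 ?powR_ge0.
have [K HK] := lem5_expect_bound p q C pq q2p (ltW C0) tail_le.
split; first by move=> n n0; have [] := lem5_expect_fin_le (HK n n0).
apply/eqO_exP; exists (`|K| + C * dyadic_const p q).
  by rewrite ltr_pwDr ?mulr_gt0 ?dyadic_const_gt0.
near=> n.
have n0 : (0 < n)%N by near: n; exact: nbhs_infty_gt.
have := HK n n0; rewrite natrM => /lem5_expect_fin_le[_ /le_trans ->] //.
rewrite (ger0_norm (powR_ge0 _ _)) (mulrDl `|K|) lerD // (le_trans (ler_norm K)) //.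
rewrite ler_peMr // -[X in X <= _](powRr0 n%:R).
apply: ler_powR; first by rewrite ler1n.
by move: q2p; rewrite natrM; lra.
Unshelve. all: by end_near.
Qed.

End damped_moment.

Theorem lemma5 (d : measure_display) (T : measurableType d) (R : realType)
  (P : probability T R) (X : {RV P >-> R})
  (Xpos : forall t, 0 < X t) (EX1 : ('E_P[X])%E = 1%:E)
  (p : nat) (hp : (2 <= p)%N) :
  ((fun x : R => tail_prob X x) =o_ (pinfty_filter R) (fun x : R => x ^- p.+1) ->
     (forall n : nat, (0 < n)%N -> (lem5_expect X p n < +oo)%E) /\
     (fun n : nat => fine (lem5_expect X p n))
       =o_\oo (fun n : nat => n%:R ^+ p.-1 : R))
  /\
  (forall q : R, p%:R < q -> q < (2 * p)%:R ->
     (fun x : R => tail_prob X x) =O_ (pinfty_filter R) (fun x : R => powR x (- q)) ->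
     (forall n : nat, (0 < n)%N -> (lem5_expect X p n < +oo)%E) /\
     (fun n : nat => fine (lem5_expect X p n))
       =O_\oo (fun n : nat => powR n%:R (2 * p%:R - q))).
Proof.
have X_ge0 t : 0 <= X t by exact: ltW.
split; first exact: lem5_expect_littleo X_ge0 p hp.
by move=> q pq q2p; exact: lem5_expect_bigO X_ge0 p q pq q2p.
Qed.
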